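(* Let $\Omega\subset\mathbb{R}^d$ be a domain and let $u\in\mathcal{S}^F(\Omega)$. Then $$L_u(u)\ge(2-\gamma)u^{\gamma-1}\quad\text{in }\{u>0\}\cap\Omega,\qquad\text{and}\qquad \Delta u\le u^{\gamma-1}\quad\text{in }\Omega.$$
   Context: Fix $d\ge1$, $\Lambda\ge1$, $\gamma\in(1,2)$. $\mathcal{S}_d$ is the space of real symmetric $d\times d$ matrices. Standing assumptions on $F:\mathcal{S}_d\to\mathbb{R}$: (i) uniform ellipticity: $\frac1\Lambda\|P\|\le F(M+P)-F(M)\le\Lambda\|P\|$ for all $M,P\in\mathcal{S}_d$, $P\ge0$; (ii) $F$ is convex, $F(0)=0$, and the trace map $M\mapsto \mathrm{trace}(M)$ is a sub-differential of $F$ at $0$; (iii) either $F$ is (Gâteaux) differentiable at $0$, or $F(\lambda M)=\lambda F(M)$ for all $\lambda>0$, $M\in\mathcal{S}_d$. A sub-differential of $F$ at $A\in\mathcal{S}_d$ is a linear map $S_A:\mathcal{S}_d\to\mathbb{R}$ with $S_A(M)\le F(A+M)-F(A)$ for all $M\in\mathcal{S}_d$. $\mathcal{S}^F(\Omega)$ is the class of continuous (viscosity, hence classical) solutions of $F(D^2u)=u^{\gamma-1}$, $u\ge0$ in $\Omega$. The linearized operator is $L_u(w)=S_{D^2u}(D^2w)-(\gamma-1)u^{\gamma-2}w$ in $\{u>0\}\cap\Omega$, where at each point $x$, $S_{D^2u}=S_{D^2u(x)}$ is a sub-differential of $F$ at $D^2u(x)$. *)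

From HB Require Import structures.
From mathcomp Require Import all_boot all_order all_algebra.
From mathcomp Require Import all_classical all_reals all_analysis.
Set Implicit Arguments. Unset Strict Implicit. Unset Printing Implicit Defensive.
Import Order.TTheory GRing.Theory Num.Theory.
Import numFieldNormedType.Exports.
Local Open Scope classical_set_scope.
Local Open Scope ring_scope.

Section Defs.
Variables (R : realType) (d : nat).

Definition symmx (M : 'M[R]_d) : Prop := M^T = M.

Definition psdmx (P : 'M[R]_d) : Prop :=
  forall v : 'rV[R]_d, 0 <= (v *m P *m v^T) 0 0.

(* operator (spectral) norm of a symmetric matrix: sup over Euclidean unit
   vectors v of |v P v^T| *)
Definition mxnorm (P : 'M[R]_d) : R :=
  sup [set r : R | exists v : 'rV[R]_d,
         (v *m v^T) 0 0 = 1 /\ r = `|(v *m P *m v^T) 0 0|].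

(* S is a linear map S_d -> R (values off S_d are irrelevant) *)
Definition sym_linear (S : 'M[R]_d -> R) : Prop :=
  forall (a : R) (M N : 'M[R]_d), symmx M -> symmx N ->
    S (a *: M + N) = a * S M + S N.

Definition is_subdiff (F : 'M[R]_d -> R) (A : 'M[R]_d) (S : 'M[R]_d -> R)
  : Prop :=
  sym_linear S /\ forall M, symmx M -> S M <= F (A + M) - F A.

Definition unif_elliptic (Lam : R) (F : 'M[R]_d -> R) : Prop :=
  forall M P : 'M[R]_d, symmx M -> symmx P -> psdmx P ->
    Lam^-1 * mxnorm P <= F (M + P) - F M /\ F (M + P) - F M <= Lam * mxnorm P.

Definition convex_on_sym (F : 'M[R]_d -> R) : Prop :=
  forall (M N : 'M[R]_d) (t : R), symmx M -> symmx N -> 0 <= t <= 1 ->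
    F ((1 - t) *: M + t *: N) <= (1 - t) * F M + t * F N.

Definition gateaux_diff (F : 'M[R]_d -> R) (A : 'M[R]_d) : Prop :=
  exists L : 'M[R]_d -> R, sym_linear L /\
    forall M, symmx M ->
      (fun t : R => (F (A + t *: M) - F A) / t) @ 0^' --> L M.

Definition pos_homogeneous (F : 'M[R]_d -> R) : Prop :=
  forall (l : R) (M : 'M[R]_d), 0 < l -> symmx M -> F (l *: M) = l * F M.

Definition standing_F (Lam : R) (F : 'M[R]_d -> R) : Prop :=
  [/\ unif_elliptic Lam F,
      convex_on_sym F, F 0 = 0, is_subdiff F 0 (@mxtrace R d)
    & gateaux_diff F 0 \/ pos_homogeneous F].

Definition ebasis (i : 'I_d) : 'rV[R]_d := delta_mx 0 i.

Definition hessian (u : 'rV[R]_d -> R) (x : 'rV[R]_d) : 'M[R]_d :=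
  \matrix_(i, j) ('D_(ebasis i) ('D_(ebasis j) u)) x.

Definition C2_on (Om : set 'rV[R]_d) (u : 'rV[R]_d -> R) : Prop :=
  [/\ forall x, Om x -> differentiable u x,
      forall j x, Om x -> differentiable ('D_(ebasis j) u) x
    & forall i j, {within Om, continuous ('D_(ebasis i) ('D_(ebasis j) u))}].

Definition in_SF (gam : R) (F : 'M[R]_d -> R) (Om : set 'rV[R]_d)
  (u : 'rV[R]_d -> R) : Prop :=
  [/\ C2_on Om u, forall x, Om x -> 0 <= u x
    & forall x, Om x -> F (hessian u x) = u x `^ (gam - 1)].

(* linearized operator L_u(w)(x) with the sub-differential S at D^2u(x) *)
Definition Lu (gam : R) (S : 'M[R]_d -> R) (u w : 'rV[R]_d -> R)
  (x : 'rV[R]_d) : R :=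
  S (hessian w x) - (gam - 1) * u x `^ (gam - 2) * w x.

End Defs.

From HB Require Import structures.
From mathcomp Require Import all_boot all_order all_algebra.
From mathcomp Require Import all_classical all_reals all_analysis.
From mathcomp Require Import ring lra.
Import Order.TTheory GRing.Theory Num.Theory.
Import numFieldNormedType.Exports.
Local Open Scope classical_set_scope.
Local Open Scope ring_scope.

(* The Hessian of a C^2 function is symmetric (Schwarz), so the subdifferential
   inequalities, which only test symmetric matrices, apply to D^2u(x).  Testing
   a subdifferential S of F at D^2u with M = -D^2u gives
   S(D^2u) >= F(D^2u) - F(0) = u^(gam-1), while L_u(u) = S(D^2u) - (gam-1) u^(gam-1).
   Testing the subdifferential trace of F at 0 with M = D^2u gives
   Delta u <= F(D^2u) = u^(gam-1). *)

Section NearValues.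
Context {R : realType} {T : topologicalType}.

Lemma eq_near_values (g k : T -> R) x :
  {for x, continuous g} -> {for x, continuous k} ->
  (forall U, nbhs x U -> exists y z, [/\ U y, U z & g y = k z]) ->
  g x = k x.
Proof.
move=> gx kx near_eq; apply/eqP; rewrite -subr_eq0 -normr_le0.
apply/ler_addgt0Pr => e e0; rewrite add0r.
have e20 : 0 < e / 2 by rewrite divr_gt0.
have [y [z [[gy _] [_ kz] gk]]] := near_eq _ (filterI
  ((cvgrPdist_lt _ _).1 gx _ e20) ((cvgrPdist_lt _ _).1 kx _ e20)).
rewrite (_ : g x - k x = (g x - g y) - (k x - k z)); last by rewrite gk; ring.
apply: (le_trans (ler_normB _ _)).
by rewrite [e]splitr lerD // ltW.
Qed.

End NearValues.

Section DirectionalDerivatives.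
Context {R : realType} {V : normedModType R}.
Implicit Types (f : V -> R) (a b c p x y : V).

Lemma is_derive_line f a p (s : R) :
  derivable f (p + s *: a) a ->
  is_derive s 1 (fun t => f (p + t *: a)) ('D_a f (p + s *: a)).
Proof.
move=> df.
have quotE : (fun h : R => h^-1 *: (((fun t => f (p + t *: a)) \o shift s) (h *: 1)
                                    - f (p + s *: a)))
  = (fun h : R => h^-1 *: ((f \o shift (p + s *: a)) (h *: a) - f (p + s *: a))).
  apply/funext => h /=; congr (_ *: (f _ - _)).
  by rewrite [h *: 1]mulr1 scalerDl addrCA addrC.
by split; rewrite /derivable /derive quotE.
Qed.

Lemma MVT_line f a p (h : R) : 0 <= h ->
  (forall s, 0 <= s <= h -> derivable f (p + s *: a) a) ->
  exists2 s, 0 <= s <= h & f (p + h *: a) - f p = 'D_a f (p + s *: a) * h.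
Proof.
move=> h0 df.
have der s : s \in `[0, h] ->
    is_derive s 1 (fun t => f (p + t *: a)) ('D_a f (p + s *: a)).
  by rewrite in_itv => /df /is_derive_line.
have [s s_in E] := MVT_segment h0 (fun s s_in => der s (subset_itv_oo_cc s_in))
  (derivable_within_continuous (fun s s_in => @ex_derive _ _ _ _ _ _ _ (der s s_in))).
by exists s; [rewrite in_itv in s_in | rewrite scale0r addr0 subr0 in E].
Qed.

Lemma derive_shift f c y v : 'D_v (fun z => f (z + c)) y = 'D_v f (y + c).
Proof. by rewrite /derive /comp /=; under eq_fun do rewrite -addrA. Qed.

Lemma derivable_shift f c y v :
  derivable f (y + c) v -> derivable (fun z => f (z + c)) y v.
Proof. by rewrite /derivable /comp /=; under eq_fun do rewrite addrA. Qed.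

Lemma second_difference_MVT f a b x (h : R) : 0 <= h ->
  (forall s t, 0 <= s <= h -> 0 <= t <= h -> derivable f (x + s *: a + t *: b) a) ->
  (forall s t, 0 <= s <= h -> 0 <= t <= h ->
     derivable ('D_a f) (x + s *: a + t *: b) b) ->
  exists s t, [/\ 0 <= s <= h, 0 <= t <= h &
    f (x + h *: a + h *: b) - f (x + h *: b) - f (x + h *: a) + f x
      = h ^+ 2 * 'D_b ('D_a f) (x + s *: a + t *: b)].
Proof.
move=> h0 dfa dDfa.
have dfa0 s : 0 <= s <= h -> derivable f (x + s *: a) a.
  by move=> s_in; have := dfa s 0 s_in; rewrite lexx h0 scale0r addr0; apply.
pose g := (fun y => f (y + h *: b)) - f.
have [s s_in Eg] : exists2 s, 0 <= s <= h &
    g (x + h *: a) - g x = 'D_a g (x + s *: a) * h.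
  apply: MVT_line => // s s_in; apply: derivableB; last exact: dfa0.
  by apply/derivable_shift/dfa; rewrite ?h0 ?lexx.
have [t t_in Et] :=
  MVT_line ('D_a f) b (x + s *: a) h h0 (fun t t_in => dDfa s t s_in t_in).
exists s, t; split => //.
rewrite deriveB ?derive_shift ?Et in Eg; last 2 first.
- by apply/derivable_shift/dfa; rewrite ?h0 ?lexx.
- exact: dfa0.
transitivity (g (x + h *: a) - g x); first by rewrite /g !fctE; ring.
by rewrite Eg; ring.
Qed.

Lemma near_square (U : set V) a b x : nbhs x U ->
  exists2 h : R, 0 < h &
    forall s t, 0 <= s <= h -> 0 <= t <= h -> U (x + s *: a + t *: b).
Proof.
case/nbhs_normP => r /= r0 ballU.
have k0 : 0 < 2 * (`|a| + `|b| + 1) by rewrite mulr_gt0 // ltr_wpDl.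
exists (r / (2 * (`|a| + `|b| + 1))); first by rewrite divr_gt0.
move=> s t /andP[s0 sh] /andP[t0 th]; apply: ballU => /=.
rewrite -addrA opprD addrA subrr add0r normrN.
apply: (le_lt_trans (ler_normD _ _)); rewrite !normrZ !ger0_norm //.
apply: (@le_lt_trans _ _ (r / (2 * (`|a| + `|b| + 1)) * (`|a| + `|b|))).
  by rewrite mulrDr lerD // ler_wpM2r.
rewrite mulrAC ltr_pdivrMr // ltr_pM2l //.
by have := normr_ge0 a; have := normr_ge0 b; lra.
Qed.

(* Both mixed partials are, at nearby points, the same second difference over h^2. *)
Lemma derive_mixedC f a b x :
  (\forall y \near x, (derivable f y a /\ derivable ('D_a f) y b)
                  /\ (derivable f y b /\ derivable ('D_b f) y a)) ->
  {for x, continuous ('D_b ('D_a f))} -> {for x, continuous ('D_a ('D_b f))} ->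
  'D_b ('D_a f) x = 'D_a ('D_b f) x.
Proof.
move=> near_der cba cab; apply: (eq_near_values _ _ _ cba cab) => U Ux.
have [h h0 sq] := near_square _ a b x (filterI Ux near_der).
set D := (_ `&` _) in sq.
have sq' s t : 0 <= s <= h -> 0 <= t <= h -> D (x + s *: b + t *: a).
  by move=> s_in t_in; rewrite addrAC; exact: sq.
have [s1 [t1 [s1_in t1_in E1]]] := second_difference_MVT f a b x h (ltW h0)
  (fun s t s_in t_in => (sq s t s_in t_in).2.1.1)
  (fun s t s_in t_in => (sq s t s_in t_in).2.1.2).
have [s2 [t2 [s2_in t2_in E2]]] := second_difference_MVT f b a x h (ltW h0)
  (fun s t s_in t_in => (sq' s t s_in t_in).2.2.1)
  (fun s t s_in t_in => (sq' s t s_in t_in).2.2.2).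
exists (x + s1 *: a + t1 *: b), (x + s2 *: b + t2 *: a).
split; [exact: (sq _ _ s1_in t1_in).1 | exact: (sq' _ _ s2_in t2_in).1 |].
apply: (mulfI (expf_neq0 2 (lt0r_neq0 h0))).
by rewrite -E1 -E2 [x + h *: b + h *: a]addrAC; ring.
Qed.

End DirectionalDerivatives.

Lemma hessian_sym (R : realType) (d : nat) (Om : set 'rV[R]_d) (u : 'rV[R]_d -> R) x :
  open Om -> C2_on Om u -> Om x -> symmx (hessian u x).
Proof.
move=> Om_open [du dDu cDDu] Omx; apply/matrixP => i j; rewrite !mxE.
have cont i' j' : {for x, continuous ('D_(ebasis R i') ('D_(ebasis R j') u))}.
  move: (cDDu i' j'); rewrite continuous_open_subspace // => /(_ x); apply.
  by rewrite inE.
apply: derive_mixedC (cont _ _) (cont _ _).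
by apply: filterS (open_nbhs_nbhs (conj Om_open Omx)) => y Omy;
  split; split; apply: diff_derivable; [exact: du | exact: dDu | exact: du | exact: dDu].
Qed.

Section SymmetricLinear.
Context {R : realType} {d : nat}.
Implicit Types (F S : 'M[R]_d -> R) (A M : 'M[R]_d).

Lemma symmx0 : symmx (0 : 'M[R]_d).
Proof. exact: trmx0. Qed.

Lemma symmxN {M} : symmx M -> symmx (- M).
Proof. by rewrite /symmx linearN /= => ->. Qed.

Lemma sym_linear0 S : sym_linear S -> S 0 = 0.
Proof.
move=> S_lin; have := S_lin 1 0 0 symmx0 symmx0.
by rewrite scaler0 addr0 mul1r => /eqP; rewrite -subr_eq addrN eq_sym => /eqP.
Qed.

Lemma sym_linearN S M : sym_linear S -> symmx M -> S (- M) = - S M.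
Proof.
move=> S_lin M_sym; have := S_lin (-1) M 0 M_sym symmx0.
by rewrite addr0 sym_linear0 // addr0 scaleN1r mulN1r.
Qed.

Lemma subdiff_self_ge {F A S} : is_subdiff F A S -> symmx A -> F A - F 0 <= S A.
Proof.
move=> [S_lin S_sub] A_sym; have := S_sub _ (symmxN A_sym).
by rewrite addrN sym_linearN // lerNl opprB.
Qed.

End SymmetricLinear.

Theorem proposition2p8 (R : realType) (d : nat) (Lam gam : R)
  (F : 'M[R]_d -> R) (Om : set 'rV[R]_d) (u : 'rV[R]_d -> R) :
  (1 <= d)%N -> 1 <= Lam -> 1 < gam < 2 ->
  standing_F Lam F ->
  open Om -> connected Om ->
  in_SF gam F Om u ->
  (forall x, Om x -> 0 < u x ->
     forall S, is_subdiff F (hessian u x) S ->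
       (2 - gam) * u x `^ (gam - 1) <= Lu gam S u u x)
  /\
  (forall x, Om x -> \tr (hessian u x) <= u x `^ (gam - 1)).
Proof.
move=> _ _ _ [_ _ F0 [_ trace_sub] _] Om_open _ [uC2 _ u_eq].
have H_sym x : Om x -> symmx (hessian u x) by apply: hessian_sym.
split=> [x Omx ux S S_sub | x Omx].
- have powS : u x `^ (gam - 2) * u x = u x `^ (gam - 1).
    rewrite -{2}(powRr1 (ltW ux)) -powRD ?(gt_eqF ux) ?implybT //.
    by congr (_ `^ _); ring.
  have := subdiff_self_ge S_sub (H_sym x Omx).
  rewrite F0 subr0 u_eq // /Lu -mulrA powS; nra.
- by have := trace_sub _ (H_sym x Omx); rewrite add0r F0 subr0 u_eq.
Qed.
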